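(* Let $a(x,\xi)$, $x,\xi\in\mathbb{R}^d$, be a smooth symbol of order zero and type $(1,0)$ which is compactly supported in $x$. Then for every $M>0$ there exists $C_M>0$ such that for all $\epsilon>0$, the $\epsilon$-separation rank $r_\epsilon$ of $a(x,\xi)$ with respect to the variables $x$ and $\xi$ obeys $r_\epsilon\le C_M\,\epsilon^{-1/M}$.
   Context: A smooth function $a(x,\xi)$ is a symbol of order zero and type $(1,0)$ if for every pair of multi-indices $(\alpha,\beta)$ there is a constant $C_{\alpha\beta}>0$ with $|\partial_\xi^\alpha\partial_x^\beta a(x,\xi)|\le C_{\alpha\beta}(1+|\xi|^2)^{-|\alpha|/2}$ for all $x,\xi$. For a function $f(x,\xi)$ and $\epsilon>0$, the $\epsilon$-separation rank is the smallest integer $r_\epsilon$ for which there exist functions $c_n(x)$, $d_n(\xi)$ ($0\le n\le r_\epsilon-1$) with $|f(x,\xi)-\sum_{n=0}^{r_\epsilon-1}c_n(x)d_n(\xi)|\le\epsilon$ for all $x,\xi$. *)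

From HB Require Import structures.
From mathcomp Require Import all_boot all_order all_algebra.
From mathcomp Require Import all_classical all_reals all_analysis.
Set Implicit Arguments. Unset Strict Implicit. Unset Printing Implicit Defensive.
Import Order.TTheory GRing.Theory Num.Theory.
Import numFieldNormedType.Exports.
Local Open Scope ring_scope.

Section Defs.
Variables (R : realType) (d : nat).

Definition phase := ('rV[R]_d * 'rV[R]_d)%type.

Definition enorm (v : 'rV[R]_d) : R := Num.sqrt (\sum_(j < d) v 0 j ^+ 2).

Definition xdir (i : 'I_d) : phase := (delta_mx 0 i, 0).
Definition xidir (i : 'I_d) : phase := (0, delta_mx 0 i).

Fixpoint iterD (s : seq phase) (f : phase -> R) : phase -> R :=
  match s with
  | [::] => f
  | v :: s' => fun p => 'D_v (iterD s' f) p
  end.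

Definition smooth (f : phase -> R) : Prop :=
  forall (s : seq phase) (p : phase), differentiable (iterD s f) p.

(* symbol of order 0 and type (1,0): for multi-indices alpha (in xi), beta (in x),
   represented as sequences of coordinate indices (|alpha| = size alpha),
   |d_xi^alpha d_x^beta a(x,xi)| <= C (1+|xi|^2)^(-|alpha|/2). *)
Definition symbol0_10 (a : phase -> R) : Prop :=
  smooth a /\
  forall (alpha beta : seq 'I_d), exists2 C : R, 0 < C &
    forall (x xi : 'rV[R]_d),
      `| iterD (map xidir alpha ++ map xdir beta) a (x, xi) |
        <= C * (1 + enorm xi ^+ 2) `^ (- ((size alpha)%:R / 2)).

Definition compact_support_x (a : phase -> R) : Prop :=
  exists K : set 'rV[R]_d, compact K /\
    forall x xi, ~ K x -> a (x, xi) = 0.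

Definition sep_approx (f : phase -> R) (eps : R) (r : nat) : Prop :=
  exists (c : nat -> 'rV[R]_d -> R) (e : nat -> 'rV[R]_d -> R),
    forall x xi, `| f (x, xi) - \sum_(n < r) c n x * e n xi | <= eps.

Definition is_sep_rank (f : phase -> R) (eps : R) (r : nat) : Prop :=
  sep_approx f eps r /\ forall r', sep_approx f eps r' -> (r <= r')%N.

End Defs.

(* Enclose the x-support of a in a box [-L, L]^d, cover it by a grid of
   half-open cubes of side h, and replace a on each cube by its Taylor
   polynomial of order n in x at the corner of the cube.  Each Taylor term is a
   function of x (cube indicator times monomial) times a function of xi (an
   x-derivative of a at the corner), so this is a separated approximation with
   O(h^-d) terms; since the x-derivatives of a symbol are bounded uniformly in
   xi, its error is O(h^n).  Choosing h^n ~ eps and n > d M gives a rank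
   O(eps^(-d/n)) = O(eps^(-1/M)). *)

From Pilot Require Import Defs.
From HB Require Import structures.
From mathcomp Require Import all_boot all_order all_algebra.
From mathcomp Require Import all_classical all_reals all_analysis.
From mathcomp Require Import lra.
Set Implicit Arguments. Unset Strict Implicit. Unset Printing Implicit Defensive.
Import Order.TTheory GRing.Theory Num.Theory.
Import numFieldNormedType.Exports.
Local Open Scope ring_scope.

Section TaylorUnitInterval.
Variable R : realType.

Lemma is_derive_poly n (c : nat -> R) (t : R) :
  is_derive t 1 (fun s : R => \sum_(k < n) c k * s ^+ k)
    (\sum_(k < n) c k * (k%:R * t ^+ k.-1)).
Proof.
have -> : (fun s : R => \sum_(k < n) c k * s ^+ k) =
    \sum_(k < n) (fun s : R => c k * s ^+ k).
  by apply: funext => s; rewrite fct_sumE.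
apply: is_derive_sum => k.
have -> : (fun s : R => c k * s ^+ k) = c k \*: (id ^+ k).
  by apply: funext => s; rewrite /GRing.scale /= !fctE.
apply: is_derive_eq (is_deriveZ (c k) (is_deriveX k (is_derive_id t 1))) _.
by rewrite /GRing.scale /= mulr1.
Qed.

Lemma taylor_remainder_le n (G : nat -> R -> R) (B u : R) :
  (forall k (t : R), is_derive t (1 : R) (G k) (G k.+1 t)) ->
  (forall t, 0 <= t <= 1 -> `|G n t| <= B) -> 0 <= u <= 1 ->
  `|G 0%N u - \sum_(k < n) G k 0 / k`!%:R * u ^+ k| <= B.
Proof.
elim: n G u => [|n IH] G u dG bG u01; first by rewrite big_ord0 subr0 bG.
(* The remainder of order n+1 for G has as derivative the remainder of order n
   for G \o S, so the mean value theorem reduces n+1 to n. *)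
pose rem n' (G' : nat -> R -> R) (s : R) :=
  G' 0%N s - \sum_(k < n') G' k 0 / k`!%:R * s ^+ k.
have drem (s : R) : is_derive s (1 : R) (rem n.+1 G) (rem n (G \o S) s).
  apply: is_derive_eq
    (is_deriveB (dG 0%N s) (is_derive_poly n.+1 (fun k => G k 0 / k`!%:R) s)) _.
  rewrite big_ord_recl /= mul0r mulr0 add0r; congr (_ - _).
  apply: eq_bigr => k _; rewrite /bump /= add1n add0n factS natrM invfM.
  by rewrite [_^-1 * _]mulrC -!mulrA mulKf ?pnatr_eq0.
have rem0 : rem n.+1 G 0 = 0.
  rewrite /rem big_ord_recl /= expr0 fact0 invr1 !mulr1 big1 ?addr0 ?subrr //.
  by move=> k _; rewrite expr0n mulr0.
case/andP: u01 => u0 u1.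
change (`|rem n.+1 G u| <= B); rewrite -[rem n.+1 G u]subr0 -[X in _ - X]rem0.
have [c cu ->] : exists2 c, c \in `[0, u] &
    rem n.+1 G u - rem n.+1 G 0 = rem n (G \o S) c * (u - 0).
  apply: MVT_segment u0 (fun s _ => drem s) _.
  exact: derivable_within_continuous (fun s _ => @ex_derive _ _ _ _ _ _ _ (drem s)).
rewrite subr0 normrM (ger0_norm u0) -[B]mulr1 ler_pM //.
apply: IH => //; move: cu; rewrite in_itv /= => /andP[-> cu].
exact: le_trans cu u1.
Qed.

End TaylorUnitInterval.

Section TaylorInX.
Variables (R : realType) (d : nat).
Implicit Types (a F : phase R d -> R) (s x xi : 'rV[R]_d) (p v : phase R d).

Definition xvec s : phase R d := (s, 0).

Definition xderiv (w : seq 'I_d) a : phase R d -> R := Defs.iterD (map (@xdir R d) w) a.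

Fixpoint words k : seq (seq 'I_d) :=
  if k is k'.+1 then [seq i :: w | i <- enum 'I_d, w <- words k'] else [:: [::]].

Definition words_lt n : seq (seq 'I_d) := flatten [seq words k | k <- iota 0 n].

Lemma size_words k w : w \in words k -> size w = k.
Proof.
elim: k w => [|k IH] w /=; first by rewrite inE => /eqP ->.
by case/allpairsPdep => i [w' [_ /IH <- ->]].
Qed.

Lemma norm_sum_le_size (I : eqType) (l : seq I) (f : I -> R) (K : R) :
  (forall i, i \in l -> `|f i| <= K) -> `|\sum_(i <- l) f i| <= (size l)%:R * K.
Proof.
move=> fK; apply: le_trans (ler_norm_sum _ _ _) _.
rewrite -sum1_size natr_sum mulr_suml big_seq [X in _ <= X]big_seq.
by apply: ler_sum => i il; rewrite mul1r fK.
Qed.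

Lemma norm_prod_le_exp s (w : seq 'I_d) (h : R) :
  (forall i, `|s 0 i| <= h) -> `|\prod_(i <- w) s 0 i| <= h ^+ size w.
Proof.
move=> sh; elim: w => [|i w IH]; first by rewrite big_nil normr1.
by rewrite big_cons normrM exprS ler_pM.
Qed.

Lemma xvec_sum s : xvec s = \sum_(i <- enum 'I_d) s 0 i *: xdir R i.
Proof.
rewrite /xvec /xdir; apply: injective_projections => /=.
  rewrite (big_morph fst (id1 := 0) (op1 := +%R)) //= big_enum /=.
  by rewrite {1}(row_sum_delta s).
rewrite (big_morph snd (id1 := 0) (op1 := +%R)) //=.
by rewrite big1 // => i _; rewrite scaler0.
Qed.

Lemma derive_xvec F p s : differentiable F p ->
  'D_(xvec s) F p = \sum_(i <- enum 'I_d) s 0 i * 'D_(xdir R i) F p.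
Proof.
move=> dF; rewrite deriveE // xvec_sum linear_sum.
by apply: eq_bigr => i _; rewrite linearZ /= deriveE.
Qed.

Lemma is_derive_sum_mul (I : Type) (l : seq I) (c : I -> R)
    (G : I -> phase R d -> R) p v :
  (forall i, differentiable (G i) p) ->
  is_derive p v (fun q => \sum_(i <- l) c i * G i q)
    (\sum_(i <- l) c i * 'D_v (G i) p).
Proof.
move=> dG; elim: l => [|i l IH].
  under [fun q => _]funext do rewrite big_nil.
  by rewrite big_nil; exact: is_derive_cst.
under [fun q => _]funext do rewrite big_cons.
rewrite big_cons; apply: (is_deriveD (f := c i \*: G i)) => //.
exact/is_deriveZ/derivableP/diff_derivable.
Qed.

Lemma iterD_xvec a s k p : smooth a ->
  Defs.iterD (nseq k (xvec s)) a p =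
  \sum_(w <- words k) (\prod_(i <- w) s 0 i) * xderiv w a p.
Proof.
move=> sa; elim: k p => [|k IH] p; first by rewrite /= big_seq1 big_nil mul1r.
rewrite /= (_ : Defs.iterD _ a = fun q => \sum_(w <- words k)
    (\prod_(i <- w) s 0 i) * xderiv w a q); last exact: funext.
have := is_derive_sum_mul (words k) (fun w => \prod_(i <- w) s 0 i)
  (G := fun w => xderiv w a) (xvec s) (fun w => sa _ p).
move/@derive_val => ->.
rewrite big_allpairs_dep /=.
under eq_bigr do rewrite (derive_xvec _ (sa _ p)) big_distrr /=.
rewrite exchange_big /=; apply: eq_bigr => i _; apply: eq_bigr => w _.
by rewrite big_cons mulrCA mulrA.
Qed.

Lemma norm_iterD_xvec_le a s k p h B : smooth a ->
  (forall w, w \in words k -> `|xderiv w a p| <= B) -> (forall i, `|s 0 i| <= h) ->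
  `|Defs.iterD (nseq k (xvec s)) a p| <= (size (words k))%:R * (h ^+ k * B).
Proof.
move=> sa wB sh; rewrite iterD_xvec //; apply: norm_sum_le_size => w wk.
rewrite normrM; apply: ler_pM => //; last exact: wB.
by rewrite -(size_words wk) norm_prod_le_exp.
Qed.

Lemma is_derive_line F p v (t : R) : differentiable F (p + t *: v) ->
  is_derive t 1 (fun u => F (p + u *: v)) ('D_v F (p + t *: v)).
Proof.
move=> dF; set q := p + t *: v.
have quotE : (fun u : R => u^-1 *: (((fun u => F (p + u *: v)) \o shift t) (u *: 1)
    - F (p + t *: v))) = (fun u : R => u^-1 *: ((F \o shift q) (u *: v) - F q)).
  apply: funext => u /=; congr (_ *: (F _ - _)).
  by rewrite /q /shift /= [u%:A]mulr1 scalerDl addrCA.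
apply: DeriveDef; first by rewrite /derivable quotE; apply: diff_derivable.
by rewrite /derive quotE.
Qed.

(* A multi-index alpha of order k occurs k!/alpha! times in words k, hence the
   factor 1/k! instead of 1/alpha!. *)
Definition xtaylor a n (x0 x xi : 'rV[R]_d) : R :=
  \sum_(w <- words_lt n)
    (\prod_(i <- w) (x - x0) 0 i) / (size w)`!%:R * xderiv w a (x0, xi).

Lemma xtaylor_remainder_le a n (x0 x xi : 'rV[R]_d) h B : smooth a ->
  (forall i, `|(x - x0) 0 i| <= h) ->
  (forall w, w \in words n -> forall p, `|xderiv w a p| <= B) ->
  `|a (x, xi) - xtaylor a n x0 x xi| <= (size (words n))%:R * B * h ^+ n.
Proof.
move=> sa sh wB; set s := x - x0.
pose G k (t : R) := Defs.iterD (nseq k (xvec s)) a ((x0, xi) + t *: xvec s).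
have dG k t : is_derive t (1 : R) (G k) (G k.+1 t) by apply: is_derive_line.
have GB t : 0 <= t <= 1 -> `|G n t| <= (size (words n))%:R * (h ^+ n * B).
  by move=> _; apply: norm_iterD_xvec_le => // w /wB.
suff -> : a (x, xi) - xtaylor a n x0 x xi =
    G 0%N 1 - \sum_(k < n) G k 0 / k`!%:R * 1 ^+ k.
  by rewrite mulrAC -mulrA (taylor_remainder_le dG GB) // ler01 lexx.
congr (_ - _).
  rewrite /G /= scale1r; congr a.
  by apply: injective_projections => /=; rewrite ?addr0 // addrC subrK.
rewrite /xtaylor /words_lt big_flatten big_map /=.
rewrite -[n in iota 0 n]subn0 -/(index_iota 0 n) big_mkord; apply: eq_bigr => k _.
rewrite expr1n mulr1 /G scale0r addr0 iterD_xvec // big_distrl /= big_seq.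
rewrite [RHS]big_seq; apply: eq_bigr => w /size_words ->.
by rewrite mulrAC.
Qed.

End TaylorInX.

Section Grid.
Variables (R : realType) (d : nat) (L h : R) (K : nat).
Hypothesis h_gt0 : 0 < h.
Implicit Types (x : 'rV[R]_d) (j : {ffun 'I_d -> 'I_K}).

Definition corner j : 'rV[R]_d := \row_i (- L + (j i)%:R * h).

Definition in_cube j x : bool :=
  [forall i, corner j 0 i <= x 0 i < corner j 0 i + h].

Lemma in_cube_uniq j j' x : in_cube j x -> in_cube j' x -> j = j'.
Proof.
move=> /forallP jx /forallP j'x; apply/ffunP => i; apply: val_inj => /=.
move: (jx i) (j'x i); rewrite /corner !mxE => /andP[lo hi] /andP[lo' hi'].
have hS m : m%:R * h + h = m.+1%:R * h by rewrite -addn1 natrD mulrDl mul1r.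
have := le_lt_trans lo hi'; have := le_lt_trans lo' hi.
rewrite -!addrA !ltrD2l !hS !ltr_pM2r // !ltr_nat !ltnS => le1 le2.
by apply/eqP; rewrite eqn_leq le1 le2.
Qed.

Lemma norm_sub_corner_le j x i : in_cube j x -> `|(x - corner j) 0 i| <= h.
Proof.
move=> /forallP /(_ i) /andP[lo hi].
rewrite !mxE ger0_norm ?subr_ge0 //; last by rewrite /corner mxE in lo.
by rewrite /corner mxE in hi *; lra.
Qed.

Lemma sum_in_cube (F : {ffun 'I_d -> 'I_K} -> R) x :
  \sum_j (in_cube j x)%:R * F j =
  if [pick j | in_cube j x] is Some j then F j else 0.
Proof.
case: pickP => [j0 j0x | nox]; last by rewrite big1 // => j _; rewrite nox mul0r.
rewrite (bigD1 j0) //= j0x mul1r big1 ?addr0 // => j j0Nj.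
case jx: (in_cube j x); last by rewrite mul0r.
by rewrite (in_cube_uniq jx j0x) eqxx in j0Nj.
Qed.

End Grid.

Lemma in_cube_exists (R : realType) (d : nat) (L h : R) (x : 'rV[R]_d) :
  0 < h -> (forall i, `|x 0 i| <= L) ->
  exists j : {ffun 'I_d -> 'I_(Num.trunc (2 * L / h)).+1}, in_cube L h j x.
Proof.
move=> h0 xL.
exists [ffun i => inord (Num.trunc ((x 0 i + L) / h))].
apply/forallP => i; rewrite /corner !mxE ffunE.
have [xLlo xLhi] : - L <= x 0 i /\ x 0 i <= L by move: (xL i); rewrite ler_norml => /andP.
have y0 : 0 <= (x 0 i + L) / h by rewrite divr_ge0 ?(ltW h0) //; lra.
rewrite inordK; last by rewrite ltnS le_truncn // ler_pM2r ?invr_gt0 //; lra.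
have := truncn_le ((x 0 i + L) / h); rewrite y0 ler_pdivlMr // => lo.
have := truncnS_gt ((x 0 i + L) / h); rewrite ltr_pdivrMr // -natr1 mulrDl mul1r => hi.
by apply/andP; split; lra.
Qed.

Lemma truncnS_div_le (R : realType) (c h : R) : 0 <= c -> 0 < h <= 1 ->
  (Num.trunc (c / h)).+1%:R <= (c + 1) / h.
Proof.
move=> c0 /andP[h0 h1]; rewrite -natr1 mulrDl mul1r lerD //.
  by rewrite truncn_le divr_ge0 // ltW.
by rewrite invf_ge1.
Qed.

Section SeparationRank.
Variables (R : realType) (d : nat).
Implicit Types (f : phase R d -> R) (eps : R).

Lemma sep_approx_pairs f eps (l : seq (('rV[R]_d -> R) * ('rV[R]_d -> R))) :
  (forall x xi, `|f (x, xi) - \sum_(ce <- l) ce.1 x * ce.2 xi| <= eps) ->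
  sep_approx f eps (size l).
Proof.
pose ce0 : ('rV[R]_d -> R) * ('rV[R]_d -> R) := (fun=> 0, fun=> 0).
move=> fl; exists (fun n => (nth ce0 l n).1), (fun n => (nth ce0 l n).2) => x xi.
by have := fl x xi; rewrite (big_nth ce0) big_mkord.
Qed.

Lemma sep_approx_le f eps eps' r :
  eps <= eps' -> sep_approx f eps r -> sep_approx f eps' r.
Proof. by move=> le [c [e fce]]; exists c, e => x xi; apply: le_trans le. Qed.

Lemma sep_approx0 f eps : (forall p, `|f p| <= eps) -> sep_approx f eps 0.
Proof.
by move=> fe; exists (fun _ _ => 0), (fun _ _ => 0) => x xi; rewrite big_ord0 subr0.
Qed.

Lemma exists_sep_rank f eps r0 :
  sep_approx f eps r0 -> exists r, is_sep_rank f eps r /\ (r <= r0)%N.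
Proof.
move=> fr0; have ex : exists r, `[< sep_approx f eps r >] by exists r0; apply/asboolP.
case: (ex_minnP ex) => r /asboolP fr rmin.
exists r; split; last exact/rmin/asboolP.
by split => // r' fr'; apply/rmin/asboolP.
Qed.

Lemma sep_rank_le_powR f (B D E M : R) (m n : nat) :
  0 < M -> (0 < n)%N -> m%:R * M <= n%:R -> 0 <= D -> 0 <= E ->
  (forall p, `|f p| <= B) ->
  (forall h, 0 < h <= 1 -> exists2 r, sep_approx f (D * h ^+ n) r & r%:R <= E / h ^+ m) ->
  exists2 C, 0 < C & forall eps, 0 < eps ->
    exists r, is_sep_rank f eps r /\ r%:R <= C * eps `^ (- M^-1).
Proof.
move=> M0 n0 mMn D0 E0 fB approx.
set s := M^-1; set A := 1 + `|B| + D.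
have A0 : 0 < A by rewrite /A; have := normr_ge0 B; lra.
exists (E * A `^ s + 1); first by rewrite ltr_pwDr // mulr_ge0 ?powR_ge0.
move=> eps eps0.
have [Aeps | epsA] := leP A eps.
  have [r [rk]] : exists r, is_sep_rank f eps r /\ (r <= 0)%N.
    apply/exists_sep_rank/sep_approx0 => p; apply: le_trans (fB p) _.
    by have := ler_norm B; have := normr_ge0 B; rewrite /A in Aeps; lra.
  rewrite leqn0 => /eqP r0; exists r; split => //.
  by rewrite r0 mulr_ge0 ?powR_ge0 // addr_ge0 ?mulr_ge0 ?powR_ge0.
set t := eps / A.
have t0 : 0 < t by rewrite divr_gt0.
have t1 : t <= 1 by rewrite ler_pdivrMr // mul1r ltW.
(* h^n = eps/A keeps the error below eps, and then
   h^-m = (A/eps)^(m/n) <= (A/eps)^(1/M). *)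
set h := t `^ n%:R^-1.
have h01 : 0 < h <= 1.
  by rewrite powR_gt0 //= -(powRr0 t) ger_powR ?t0 // invr_ge0 ler0n.
have hn : h ^+ n = t.
  by rewrite -powR_mulrn ?powR_ge0 // -powRrM mulVf ?powRr1 ?ltW // pnatr_eq0 -lt0n.
have tS : t `^ s <= h ^+ m.
  rewrite -powR_mulrn ?powR_ge0 // -powRrM ger_powR ?t0 //.
  by rewrite mulrC ler_pdivrMr ?ltr0n // mulrC ler_pdivlMr.
have [r fr rE] := approx h h01.
have Dh : D * h ^+ n <= eps.
  rewrite hn /t mulrCA ger_pMr // ler_pdivrMr // mul1r /A.
  by have := normr_ge0 B; lra.
have [r' [r'rank r'r]] := exists_sep_rank (sep_approx_le Dh fr).
exists r'; split => //.
apply: le_trans (_ : r%:R <= _); first by rewrite ler_nat.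
apply: le_trans rE _; apply: le_trans (_ : E / t `^ s <= _).
  have h0 : 0 < h by case/andP: h01.
  by rewrite ler_wpM2l // lef_pV2 ?posrE ?powR_gt0 ?exprn_gt0.
have -> : E / t `^ s = E * A `^ s * eps `^ (- s).
  rewrite /t powRM ?invr_ge0 ?(ltW eps0) ?(ltW A0) // -(powR_inv1 (ltW A0)).
  by rewrite -powRrM mulNr mul1r !powRN invfM invrK mulrA mulrAC.
by rewrite ler_wpM2r ?powR_ge0 // lerDl.
Qed.

End SeparationRank.

Section SymbolApproximation.
Variables (R : realType) (d : nat).
Implicit Types (a : phase R d -> R).

Lemma symbol_xderiv_bounded a (l : seq (seq 'I_d)) : symbol0_10 a ->
  exists2 B, 0 <= B & forall w, w \in l -> forall p, `|xderiv w a p| <= B.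
Proof.
case=> _ abound; elim: l => [|w l [B B0 lB]]; first by exists 0.
have [C C0 wC] := abound [::] w.
exists (B + C); first by rewrite addr_ge0 // ltW.
move=> w'; rewrite inE => /orP[/eqP -> | w'l] [x xi].
  by apply: le_trans (wC x xi) _; rewrite /= mul0r oppr0 powRr0 mulr1 lerDr.
by apply: le_trans (lB _ w'l (x, xi)) _; rewrite lerDl ltW.
Qed.

Lemma compact_support_box a : compact_support_x a ->
  exists2 L, 0 <= L & forall x xi, a (x, xi) != 0 -> forall i, `|x 0 i| <= L.
Proof.
case=> K [/compact_bounded [L0 [_ KL0]] aK].
exists (`|L0| + 1) => [|x xi /eqP ax i]; first by rewrite addr_ge0.
have Kx : K x by apply: contrapT => /(aK _ xi).
apply: le_trans (_ : `|x| <= _); first by rewrite [`|x|]mx_normrE (le_bigmax _ _ (0, i)).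
by apply: KL0 => //; rewrite ltr_pwDr // ler_norm.
Qed.

Lemma sep_approx_taylor_grid a n B L h : smooth a -> 0 < h -> 0 <= B ->
  (forall w, w \in words d n -> forall p, `|xderiv w a p| <= B) ->
  (forall x xi, a (x, xi) != 0 -> forall i, `|x 0 i| <= L) ->
  sep_approx a ((size (words d n))%:R * B * h ^+ n)
    ((Num.trunc (2 * L / h)).+1 ^ d * size (words_lt d n)).
Proof.
move=> sa h0 B0 wB aL; set K := (Num.trunc (2 * L / h)).+1.
pose cube_term (j : {ffun 'I_d -> 'I_K}) (w : seq 'I_d) :=
  (fun x => (in_cube L h j x)%:R * ((\prod_(i <- w) (x - corner L h j) 0 i) / (size w)`!%:R),
   fun xi => xderiv w a (corner L h j, xi)).
pose terms := [seq cube_term j w | j <- enum {ffun 'I_d -> 'I_K}, w <- words_lt d n].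
have <- : size terms = (K ^ d * size (words_lt d n))%N.
  by rewrite size_allpairs -cardE card_ffun !card_ord.
apply: sep_approx_pairs => x xi.
rewrite /terms big_allpairs_dep big_enum /=.
under eq_bigr => j _ do under eq_bigr do rewrite -mulrA.
under eq_bigr => j _ do rewrite -big_distrr -/(xtaylor a n (corner L h j) x xi).
rewrite sum_in_cube //; case: pickP => [j jx | nox].
  by apply: xtaylor_remainder_le => // i; exact: norm_sub_corner_le.
have -> : a (x, xi) = 0.
  by apply/eqP; apply: contraT => /aL /(in_cube_exists h0) [j]; rewrite nox.
by rewrite subr0 normr0 !mulr_ge0 // exprn_ge0 // ltW.
Qed.

End SymbolApproximation.

Theorem lemma2 (R : realType) (d : nat) (a : phase R d -> R) :
  symbol0_10 a -> compact_support_x a ->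
  forall M : R, 0 < M ->
  exists2 C : R, 0 < C &
    forall eps : R, 0 < eps ->
      exists r : nat, is_sep_rank a eps r /\ r%:R <= C * eps `^ (- M^-1).
Proof.
move=> sym supp M M0; set n := (Num.trunc (d%:R * M)).+1.
have [B B0 wB] := symbol_xderiv_bounded ([::] :: words d n) sym.
have [L L0 aL] := compact_support_box supp.
apply: (@sep_rank_le_powR _ _ _ B ((size (words d n))%:R * B)
  ((size (words_lt d n))%:R * (2 * L + 1) ^+ d) M d n) => //.
- exact: ltW (truncnS_gt _).
- exact: mulr_ge0.
- by rewrite mulr_ge0 // exprn_ge0 //; lra.
- by move=> p; apply: (wB [::]); rewrite mem_head.
move=> h h01; have h0 : 0 < h by case/andP: h01.
exists ((Num.trunc (2 * L / h)).+1 ^ d * size (words_lt d n))%N.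
  apply: sep_approx_taylor_grid => //; first exact: sym.1.
  by move=> w wn; apply: wB; rewrite inE wn orbT.
rewrite natrM natrX mulrC -[X in _ <= X]mulrA ler_wpM2l // -expr_div_n.
apply: lerXn2r; rewrite ?nnegrE //; last by apply: truncnS_div_le => //; lra.
by rewrite divr_ge0 ?ltW //; lra.
Qed.
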